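(* Let $k\ge 2$ be an integer and $n\ge 1$, $\ell\ge 0$ integers. Let ${\sf S}_k(n,\ell)$ denote the number of $k$-noncrossing RNA structures on $\{1,\dots,n\}$ with exactly $\ell$ isolated vertices, ${\sf S}_k(n)=\sum_{\ell}{\sf S}_k(n,\ell)$ the total number of $k$-noncrossing RNA structures on $\{1,\dots,n\}$, and $f_k(m,\ell)$ the number of $k$-noncrossing digraphs on $\{1,\dots,m\}$ with exactly $\ell$ isolated vertices (with $f_k(m,\ell)=0$ if $\ell>m$). Then $$ {\sf S}_k(n,\ell)=\sum_{b=0}^{\lfloor (n-\ell)/2\rfloor}(-1)^b\binom{n-b}{b}f_k(n-2b,\ell), $$ and $$ {\sf S}_k(n)=\sum_{b=0}^{\lfloor n/2\rfloor}(-1)^b\binom{n-b}{b}\left\{\sum_{\ell=0}^{n-2b}f_k(n-2b,\ell)\right\}. $$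
   Context: A digraph on $\{1,\dots,n\}$ is a set of arcs $(i,j)$ with $1\le i<j\le n$. It is a $k$-noncrossing digraph if every vertex lies in at most one arc and there are no $k$ arcs $(i_1,j_1),\dots,(i_k,j_k)$ with $i_1<i_2<\dots<i_k<j_1<j_2<\dots<j_k$ (no $k$ mutually crossing arcs). A vertex is isolated if it lies in no arc. A $1$-arc is an arc of the form $(i,i+1)$. A $k$-noncrossing RNA structure is a $k$-noncrossing digraph containing no $1$-arc. Known facts (not part of the claim): $f_k(m,\ell)=\binom{m}{\ell}f_k(m-\ell,0)$, and $\sum_{m\ge 1}f_k(m,0)x^m/m!=\det[I_{i-j}(2x)-I_{i+j}(2x)]_{i,j=1}^{k-1}$, where $I_r(2x)=\sum_{j\ge 0}x^{2r+j}/(j!(r+j)!)$; multiplying by $e^x$ gives the exponential generating function of $\sum_{\ell}f_k(m,\ell)$. *)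

(* Vertices {1,...,n} are modelled by 'I_n = {0,...,n-1}
   (order-preserving shift by one). *)
From mathcomp Require Import all_boot all_order all_algebra.
Set Implicit Arguments. Unset Strict Implicit. Unset Printing Implicit Defensive.

Definition arcset (n : nat) := {set ('I_n * 'I_n)}.

Definition is_digraph n (G : arcset n) : bool :=
  [forall a in G, (a.1 < a.2)%N].

Definition deg_le1 n (G : arcset n) : bool :=
  [forall a in G, forall b in G, (a != b) ==>
     [&& a.1 != b.1, a.1 != b.2, a.2 != b.1 & a.2 != b.2]].

(* G contains k arcs (i_1,j_1),...,(i_k,j_k) with
   i_1 < ... < i_k < j_1 < ... < j_k *)
Definition has_k_crossing k n (G : arcset n) : bool :=
  [exists f : {ffun 'I_k -> 'I_n * 'I_n},
     [&& [forall t : 'I_k, f t \in G],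
         [forall s : 'I_k, forall t : 'I_k, ((s < t)%N ==>
             (((f s).1 < (f t).1)%N && ((f s).2 < (f t).2)%N))]
       & [forall s : 'I_k, forall t : 'I_k, ((f s).1 < (f t).2)%N]]].

Definition k_noncrossing_digraph k n (G : arcset n) : bool :=
  [&& is_digraph G, deg_le1 G & ~~ has_k_crossing k G].

Definition isolated n (G : arcset n) (v : 'I_n) : bool :=
  [forall a in G, (a.1 != v) && (a.2 != v)].

Definition n_isolated n (G : arcset n) : nat := #|[set v | isolated G v]|.

Definition has_1arc n (G : arcset n) : bool :=
  [exists a in G, (val a.2 == (val a.1).+1)].

Definition k_noncrossing_RNA k n (G : arcset n) : bool :=
  k_noncrossing_digraph k G && ~~ has_1arc G.

Definition fk (k m l : nat) : nat :=
  #|[set G : arcset m | k_noncrossing_digraph k G && (n_isolated G == l)]|.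

Definition Skl (k n l : nat) : nat :=
  #|[set G : arcset n | k_noncrossing_RNA k G && (n_isolated G == l)]|.

Definition Sk (k n : nat) : nat :=
  #|[set G : arcset n | k_noncrossing_RNA k G]|.

From mathcomp Require Import all_boot all_order all_algebra.
From mathcomp Require Import zify.
Set Implicit Arguments. Unset Strict Implicit. Unset Printing Implicit Defensive.

(* Inclusion-exclusion over the 1-arcs: a k-noncrossing digraph G with set of
   1-arcs A_G contributes sum_b (-1)^b C(|A_G|, b), which is 1 if A_G is empty
   and 0 otherwise.  Exchanging the sums, the b-th term counts the pairs (G, B)
   with B a b-subset of A_G; call their number g(n, b).  Deleting a marked 1-arc
   (i, i+1) together with its two vertices, and conversely inserting one, changes
   neither the isolated vertices nor, for k >= 2, the absence of k mutually
   crossing arcs, since a 1-arc crosses no other arc.  Counting the pairs with a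
   distinguished marked arc in two ways gives
   (b+1) g(m+2, b+1) = (m+1-b) g(m, b), hence g(n, b) = C(n-b, b) f_k(n-2b, l). *)

Local Notation arc n := ('I_n * 'I_n)%type.
Local Notation arcs2 n := (arcset n * arcset n)%type.

(* [bump2 p] skips the slots p and p+1, where [insert_arc p] puts a new 1-arc. *)
Definition bump2 (p v : nat) : nat := if v < p then v else v.+2.

Lemma bump2_inj p : injective (bump2 p).
Proof. by move=> u v; rewrite /bump2; case: ifP; case: ifP; lia. Qed.

Lemma bump2_ltE p u v : (bump2 p u < bump2 p v) = (u < v).
Proof. by rewrite /bump2; case: ifP; case: ifP; lia. Qed.

Lemma bump2_neq p v : (bump2 p v != p) && (bump2 p v != p.+1).
Proof. by rewrite /bump2; case: ifP; lia. Qed.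

Lemma bump2_succE p u v :
  (bump2 p v == (bump2 p u).+1) = (v == u.+1) && (v != p).
Proof. by rewrite /bump2; case: ifP; case: ifP; lia. Qed.

Lemma has_k_crossingP k n (G : arcset n) :
  reflect (exists f : 'I_k -> arc n, [/\ forall t, f t \in G,
             forall s t : 'I_k, s < t -> ((f s).1 < (f t).1) && ((f s).2 < (f t).2)
           & forall s t : 'I_k, (f s).1 < (f t).2])
          (has_k_crossing k G).
Proof.
apply: (iffP existsP) => [[f /and3P[/forallP inG /forallP incr /forallP nest]]|].
  exists f; split=> // s t; first exact/implyP/(forallP (incr s)).
  exact: (forallP (nest s)).
case=> f [inG incr nest]; exists [ffun t => f t]; apply/and3P; split.
- by apply/forallP => t; rewrite ffunE.
- by do 2!apply/forallP => ?; rewrite !ffunE; apply/implyP/incr.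
- by do 2!apply/forallP => ?; rewrite !ffunE.
Qed.

Lemma has_k_crossingS k n (G1 G2 : arcset n) :
  G1 \subset G2 -> has_k_crossing k G1 -> has_k_crossing k G2.
Proof.
move=> /subsetP sG12 /has_k_crossingP[f [inG incr nest]].
by apply/has_k_crossingP; exists f; split=> // t; apply/sG12.
Qed.

Lemma has_k_crossing_image k n1 n2 (h : 'I_n1 -> 'I_n2) (G : arcset n1) :
  {mono h : x y / x < y} ->
  has_k_crossing k [set (h a.1, h a.2) | a in G] = has_k_crossing k G.
Proof.
move=> mono_h; apply/has_k_crossingP/has_k_crossingP => -[f [inG incr nest]].
  have /fin_all_exists[g fg] : forall t, exists a, a \in G /\ f t = (h a.1, h a.2).
    by move=> t; have /imsetP[a aG ->] := inG t; exists a.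
  exists g; split=> [t|s t st|s t]; first by case: (fg t).
  + by have := incr s t st; rewrite (fg s).2 (fg t).2 /= !mono_h.
  + by have := nest s t; rewrite (fg s).2 (fg t).2 /= mono_h.
exists (fun t => (h (f t).1, h (f t).2)); split=> [t|s t st|s t] /=.
- by rewrite imset_f.
- by rewrite !mono_h; apply: incr.
- by rewrite mono_h.
Qed.

(* Any other arc of a crossing family through the 1-arc (i, i+1) would need an
   endpoint strictly between i and i+1. *)
Lemma has_k_crossing_setD1_1arc k n (G : arcset n) (e : arc n) :
  1 < k -> e.2 = (e.1).+1 :> nat ->
  has_k_crossing k (G :\ e) = has_k_crossing k G.
Proof.
move=> lt1k e2E; apply/idP/idP; first exact/has_k_crossingS/subsetDl.
case/has_k_crossingP => f [inG incr nest]; apply/has_k_crossingP; exists f.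
split=> // t; rewrite in_setD1 inG andbT; apply/eqP => fte.
pose s0 : 'I_k := Ordinal (ltnW lt1k); pose s1 : 'I_k := Ordinal lt1k.
have [t0|t_pos] := posnP t.
- have := incr t s1; have := nest s1 t.
  by rewrite fte t0 e2E /= => lt_1e /(_ isT) /andP[lt_e1 _]; lia.
- have := incr s0 t t_pos; have := nest t s0.
  by rewrite fte e2E => lt_e2 /andP[_ lt_2e]; lia.
Qed.

Definition one_arcs n (G : arcset n) : arcset n := [set a in G | a.2 == (a.1).+1 :> nat].

Lemma in_one_arcs n (G : arcset n) a :
  (a \in one_arcs G) = (a \in G) && (a.2 == (a.1).+1 :> nat).
Proof. by rewrite inE. Qed.

Lemma one_arcs_sub n (G : arcset n) : one_arcs G \subset G.
Proof. by apply/subsetP => a; rewrite in_one_arcs => /andP[]. Qed.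

Lemma one_arcs_lt2 n (G : arcset n) : n < 2 -> one_arcs G = set0.
Proof.
move=> lt_n2; apply/setP => a; rewrite in_set0 in_one_arcs.
by apply/negP => /andP[_ /eqP a2E]; have := ltn_ord a.2; rewrite a2E; lia.
Qed.

Lemma has_1arcE n (G : arcset n) : has_1arc G = (one_arcs G != set0).
Proof.
by apply/existsP/set0Pn => -[a aP]; exists a; rewrite ?in_one_arcs // -in_one_arcs.
Qed.

Lemma deg_le1S n (B G : arcset n) : B \subset G -> deg_le1 G -> deg_le1 B.
Proof.
move=> /subsetP sBG /forall_inP dG; apply/forall_inP => a aB.
by apply/forall_inP => b bB; apply: (forall_inP (dG a (sBG a aB))); apply: sBG.
Qed.

Definition kdigraphs k n l : {set arcset n} :=
  [set G : arcset n | k_noncrossing_digraph k G && (n_isolated G == l)].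

Lemma n_isolated_le n (G : arcset n) : n_isolated G <= n.
Proof. by rewrite /n_isolated -[leqRHS]card_ord max_card. Qed.

Lemma fk_eq0 k m l : m < l -> fk k m l = 0.
Proof.
move=> lt_ml; apply/eqP; rewrite cards_eq0; apply/eqP/setP => G; rewrite !inE.
apply/negbTE/negP => /andP[_ /eqP isoG].
by move: lt_ml; rewrite -isoG ltnNge n_isolated_le.
Qed.

Section InsertArc.

Variables (m p : nat).

Lemma lift2_subproof (v : 'I_m) : bump2 p v < m.+2.
Proof. by have := ltn_ord v; rewrite /bump2; case: ifP; lia. Qed.

Definition lift2 (v : 'I_m) : 'I_m.+2 := Ordinal (lift2_subproof v).
Definition lift2_arc (a : arc m) : arc m.+2 := (lift2 a.1, lift2 a.2).

(* Meaningful only for p <= m, since [inord] truncates out-of-range values. *)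
Definition arc_at : arc m.+2 := (inord p, inord p.+1).

Definition insert_arc (G : arcset m) : arcset m.+2 := arc_at |: lift2_arc @: G.
Definition contract (G : arcset m.+2) : arcset m := [set a | lift2_arc a \in G].

Hypothesis le_pm : p <= m.

Lemma arc_at1 : val arc_at.1 = p.
Proof. by rewrite /= inordK //; lia. Qed.

Lemma arc_at2 : val arc_at.2 = p.+1.
Proof. by rewrite /= inordK //; lia. Qed.

Lemma lift2_inj : injective lift2.
Proof. by move=> u v [] /bump2_inj /val_inj. Qed.

Lemma lift2_arc_inj : injective lift2_arc.
Proof.
move=> [u1 u2] [v1 v2] e.
by congr (_, _); apply: lift2_inj; [exact: (congr1 fst e) | exact: (congr1 snd e)].
Qed.

Lemma lift2_ltE u v : (lift2 u < lift2 v) = (u < v).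
Proof. exact: bump2_ltE. Qed.

Lemma lift2_arc_at1 u : (lift2 u == arc_at.1) = false.
Proof. by apply/negbTE; rewrite -val_eqE arc_at1; case/andP: (bump2_neq p u). Qed.

Lemma lift2_arc_at2 u : (lift2 u == arc_at.2) = false.
Proof. by apply/negbTE; rewrite -val_eqE arc_at2; case/andP: (bump2_neq p u). Qed.

Lemma lift2_arc_neq a : lift2_arc a != arc_at.
Proof. by rewrite xpair_eqE lift2_arc_at1. Qed.

Lemma lift2_onto (v : 'I_m.+2) : v != p :> nat -> v != p.+1 :> nat ->
  exists u : 'I_m, v = lift2 u.
Proof.
move=> vp vp1; have lt_um : (if v < p then v : nat else v - 2) < m.
  by have := ltn_ord v; case: ifP; lia.
exists (Ordinal lt_um); apply: val_inj; rewrite /= /bump2.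
by have := ltn_ord v; case: (ltnP v p) => vp'; case: ifP; lia.
Qed.

Lemma lift2_arc_in_insert G a : (lift2_arc a \in insert_arc G) = (a \in G).
Proof. by rewrite in_setU1 (negPf (lift2_arc_neq a)) (mem_imset _ _ lift2_arc_inj). Qed.

Lemma arc_at_in_insert G : arc_at \in insert_arc G.
Proof. exact: setU11. Qed.

Lemma contract_insert G : contract (insert_arc G) = G.
Proof. by apply/setP => a; rewrite inE lift2_arc_in_insert. Qed.

Lemma insert_contract G : deg_le1 G -> arc_at \in G -> insert_arc (contract G) = G.
Proof.
move=> /forall_inP degG atG; apply/setP => a; rewrite in_setU1.
have [->|ne] := eqVneq a arc_at; first by rewrite atG.
apply/imsetP/idP => [[a' + ->]|aG]; first by rewrite inE.
have := forall_inP (degG a aG) _ atG; rewrite ne -!val_eqE arc_at1 arc_at2 /=.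
case: a aG {ne} => a1 a2 aG /and4P[a1p a1p1 a2p a2p1].
have [u1 e1] := lift2_onto a1p a1p1; have [u2 e2] := lift2_onto a2p a2p1.
by exists (u1, u2); rewrite ?inE /lift2_arc /= -e1 -e2.
Qed.

Lemma arc_at_notin_lift2 (G : arcset m) : arc_at \notin lift2_arc @: G.
Proof. by apply/imsetP => -[a _ /eqP]; rewrite eq_sym (negPf (lift2_arc_neq a)). Qed.

Lemma card_insert G : #|insert_arc G| = #|G|.+1.
Proof. by rewrite cardsU1 arc_at_notin_lift2 card_imset //; apply: lift2_arc_inj. Qed.

Lemma is_digraph_insert G : is_digraph (insert_arc G) = is_digraph G.
Proof.
apply/forall_inP/forall_inP => dG a.
  by have := dG (lift2_arc a); rewrite lift2_arc_in_insert /= bump2_ltE.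
case/setU1P => [->|/imsetP[a' a'G ->]]; first by rewrite arc_at1 arc_at2.
by rewrite /= bump2_ltE dG.
Qed.

Lemma deg_le1_insert G : deg_le1 (insert_arc G) = deg_le1 G.
Proof.
apply/forall_inP/forall_inP => dG a.
  move=> aG; apply/forall_inP => b bG.
  have := dG (lift2_arc a); rewrite lift2_arc_in_insert => /(_ aG)/forall_inP.
  move=> /(_ (lift2_arc b)); rewrite lift2_arc_in_insert => /(_ bG).
  by rewrite (inj_eq lift2_arc_inj) !(inj_eq lift2_inj).
case/setU1P => [->|/imsetP[a' a'G ->]]; apply/forall_inP => b.
  case/setU1P => [->|/imsetP[b' _ ->]]; first by rewrite eqxx.
  by rewrite ![_ == lift2 _]eq_sym !lift2_arc_at1 !lift2_arc_at2 implybT.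
case/setU1P => [->|/imsetP[b' b'G ->]].
  by rewrite !lift2_arc_at1 !lift2_arc_at2 implybT.
by rewrite (inj_eq lift2_arc_inj) !(inj_eq lift2_inj); apply: (forall_inP (dG a' a'G)).
Qed.

Lemma has_k_crossing_insert k G : 1 < k ->
  has_k_crossing k (insert_arc G) = has_k_crossing k G.
Proof.
move=> lt1k; rewrite -(@has_k_crossing_setD1_1arc _ _ _ arc_at lt1k) ?arc_at1 ?arc_at2 //.
rewrite setU1K ?arc_at_notin_lift2 //.
exact/has_k_crossing_image/lift2_ltE.
Qed.

Lemma isolated_insert_lift2 G u : isolated (insert_arc G) (lift2 u) = isolated G u.
Proof.
apply/forall_inP/forall_inP => isoG a.
  by have := isoG (lift2_arc a); rewrite lift2_arc_in_insert /= !(inj_eq lift2_inj).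
case/setU1P => [->|/imsetP[a' a'G ->]].
  by rewrite ![_ == lift2 _]eq_sym lift2_arc_at1 lift2_arc_at2.
by rewrite /= !(inj_eq lift2_inj) isoG.
Qed.

Lemma isolated_insert_lift2_onto G v :
  isolated (insert_arc G) v -> exists u, v = lift2 u.
Proof.
move=> /forall_inP/(_ _ (setU11 _ _)) /andP[].
by rewrite -!val_eqE arc_at1 arc_at2 eq_sym [_ == v :> nat]eq_sym; apply: lift2_onto.
Qed.

Lemma n_isolated_insert G : n_isolated (insert_arc G) = n_isolated G.
Proof.
rewrite /n_isolated -(card_imset _ lift2_inj); apply: eq_card => v.
rewrite inE; apply/idP/imsetP => [isoG|[u + ->]].
  have [u vE] := isolated_insert_lift2_onto isoG.
  by exists u; rewrite // inE -isolated_insert_lift2 -vE.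
by rewrite inE isolated_insert_lift2.
Qed.

Lemma lift2_arc_in_one_arcs G a :
  (lift2_arc a \in one_arcs (insert_arc G)) = (a \in one_arcs G) && (a.2 != p :> nat).
Proof. by rewrite !in_one_arcs lift2_arc_in_insert /= bump2_succE andbA. Qed.

(* Inserting (p, p+1) keeps a 1-arc (i, i+1) a 1-arc unless i + 1 = p. *)
Lemma insert_subset_one_arcs G B :
  (insert_arc B \subset one_arcs (insert_arc G)) =
  (B \subset one_arcs G) && [forall a in B, a.2 != p :> nat].
Proof.
rewrite subUset sub1set in_one_arcs setU11 arc_at1 arc_at2 eqxx sub_imset_pre /=.
apply/subsetP/andP => [sub|[/subsetP sub /forall_inP free] a aB]; last first.
  by rewrite inE lift2_arc_in_one_arcs sub ?free.
split; [apply/subsetP|apply/forall_inP] => a aB;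
  by have := sub a aB; rewrite inE lift2_arc_in_one_arcs => /andP[].
Qed.

Lemma insert_in_kdigraphs k l G :
  1 < k -> (insert_arc G \in kdigraphs k m.+2 l) = (G \in kdigraphs k m l).
Proof.
move=> lt1k; rewrite !inE /k_noncrossing_digraph.
by rewrite is_digraph_insert deg_le1_insert has_k_crossing_insert ?n_isolated_insert.
Qed.

End InsertArc.

Lemma one_arc_arc_at m (e : arc m.+2) : e.2 = (e.1).+1 :> nat -> e = arc_at m e.1.
Proof.
case: e => e1 e2 /= e2E; have := ltn_ord e2; rewrite e2E => lt_e1m.
by congr (_, _); apply: val_inj; rewrite /= inordK.
Qed.

(* The pairs counted by the b-th term of the inclusion-exclusion. *)
Definition marked k n l b : {set arcs2 n} :=
  [set GB : arcs2 n |
    [&& GB.1 \in kdigraphs k n l, GB.2 \subset one_arcs GB.1 & #|GB.2| == b]].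

Lemma in_marked k n l b GB :
  (GB \in marked k n l b) =
  [&& GB.1 \in kdigraphs k n l, GB.2 \subset one_arcs GB.1 & #|GB.2| == b].
Proof. by rewrite inE. Qed.

(* The positions p <= m where inserting (p, p+1) keeps all arcs of B 1-arcs. *)
Definition free_slots m (B : arcset m) : {set 'I_m.+1} :=
  [set p : 'I_m.+1 | [forall a in B, a.2 != p :> nat]].

Definition pointed_marked k m l b : {set arcs2 m.+2 * arc m.+2} :=
  [set x : arcs2 m.+2 * arc m.+2 | (x.1 \in marked k m.+2 l b.+1) && (x.2 \in x.1.2)].

Definition slotted_marked k m l b : {set arcs2 m * 'I_m.+1} :=
  [set y : arcs2 m * 'I_m.+1 | (y.1 \in marked k m l b) && (y.2 \in free_slots y.1.2)].

Lemma in_pointed_marked k m l b x :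
  (x \in pointed_marked k m l b) = (x.1 \in marked k m.+2 l b.+1) && (x.2 \in x.1.2).
Proof. by rewrite inE. Qed.

Lemma in_slotted_marked k m l b y :
  (y \in slotted_marked k m l b) =
  (y.1 \in marked k m l b) && [forall a in y.1.2, a.2 != y.2 :> nat].
Proof. by rewrite !inE. Qed.

Definition insert_slot m (y : arcs2 m * 'I_m.+1) : arcs2 m.+2 * arc m.+2 :=
  ((insert_arc y.2 y.1.1, insert_arc y.2 y.1.2), arc_at m y.2).

Definition contract_point m (x : arcs2 m.+2 * arc m.+2) : arcs2 m * 'I_m.+1 :=
  ((contract x.2.1 x.1.1, contract x.2.1 x.1.2), inord x.2.1).

Section PointedMarked.

Variables (k m l b : nat).
Hypothesis lt1k : 1 < k.

Lemma contract_insert_slot (y : arcs2 m * 'I_m.+1) : contract_point (insert_slot y) = y.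
Proof.
case: y => [[G B] p]; have le_pm : p <= m by rewrite -ltnS.
by rewrite /contract_point /= arc_at1 // !contract_insert // inord_val.
Qed.

Lemma insert_slot_in_pointed (y : arcs2 m * 'I_m.+1) :
  (insert_slot y \in pointed_marked k m l b) = (y \in slotted_marked k m l b).
Proof.
case: y => [[G B] p]; have le_pm : p <= m by rewrite -ltnS.
rewrite in_pointed_marked in_slotted_marked !in_marked /= arc_at_in_insert //.
rewrite insert_in_kdigraphs // insert_subset_one_arcs // card_insert // eqSS.
by rewrite andbT -!andbA [(#|B| == b) && _]andbC.
Qed.

Lemma insert_contract_point (x : arcs2 m.+2 * arc m.+2) :
  x \in pointed_marked k m l b -> insert_slot (contract_point x) = x.
Proof.
case: x => [[G B] e]; rewrite in_pointed_marked in_marked /= inE.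
move=> /andP[/and3P[/andP[kG _] sBG _] eB].
have := subsetP sBG e eB; rewrite in_one_arcs => /andP[_ /eqP e2E].
have le_em : e.1 <= m by have := ltn_ord e.2; rewrite e2E.
have eE := one_arc_arc_at e2E.
have degG : deg_le1 G by case/and3P: kG.
have sBG' : B \subset G by apply: subset_trans sBG (one_arcs_sub _).
rewrite /insert_slot /contract_point /= inordK ?ltnS // -eE.
by rewrite !insert_contract -?eE // ?(deg_le1S sBG') // (subsetP sBG').
Qed.

Lemma pointed_marked_image :
  pointed_marked k m l b = @insert_slot m @: slotted_marked k m l b.
Proof.
apply/setP => x; apply/idP/imsetP => [xP|[y yS ->]]; last first.
  by rewrite insert_slot_in_pointed.
exists (contract_point x); last by rewrite insert_contract_point.
by rewrite -insert_slot_in_pointed insert_contract_point.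
Qed.

End PointedMarked.

Lemma card_setX_dep (T1 T2 : finType) (A : {set T1}) (F : T1 -> {set T2}) :
  #|[set x : T1 * T2 | (x.1 \in A) && (x.2 \in F x.1)]| = \sum_(i in A) #|F i|.
Proof.
under [RHS]eq_bigr => i _ do rewrite -sum1_card.
by rewrite pair_big_dep -sum1_card; apply: eq_bigl => x; rewrite inE.
Qed.

Lemma one_arc_eq n (a a' : arc n) :
  a.2 = (a.1).+1 :> nat -> a'.2 = (a'.1).+1 :> nat -> a.2 = a'.2 -> a = a'.
Proof.
case: a a' => [a1 a2] [a1' a2'] /= e e' e2; rewrite e2 in e *.
by congr (_, _); apply/val_inj/succn_inj; rewrite -e -e'.
Qed.

Lemma card_free_slots m (G B : arcset m) :
  B \subset one_arcs G -> #|free_slots B| = m.+1 - #|B|.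
Proof.
move=> /subsetP sB1; have := cardsC (free_slots B); rewrite card_ord.
suff -> : #|~: free_slots B| = #|B| by lia.
have lt_a2 (a : arc m) : a.2 < m.+1 by rewrite ltnS ltnW.
have -> : ~: free_slots B = [set inord a.2 | a : arc m in B].
  apply/setP => v; rewrite !inE negb_forall_in; apply/existsP/imsetP.
    case=> a /andP[aB /negPn/eqP av]; exists a => //.
    by apply: val_inj; rewrite /= inordK.
  by case=> a aB ->; exists a; rewrite aB inordK // eqxx.
rewrite card_in_imset // => a a' aB a'B /(congr1 val); rewrite /= !inordK // => e2.
have := sB1 a aB; have := sB1 a' a'B; rewrite !in_one_arcs.
by move=> /andP[_ /eqP e'] /andP[_ /eqP e]; apply: one_arc_eq e e' (val_inj e2).
Qed.

Lemma card_pointed_marked k m l b :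
  #|pointed_marked k m l b| = #|marked k m.+2 l b.+1| * b.+1.
Proof.
rewrite (card_setX_dep _ (fun GB : arcs2 m.+2 => GB.2)) -sum_nat_const.
by apply: eq_bigr => GB; rewrite in_marked => /and3P[_ _ /eqP].
Qed.

Lemma card_slotted_marked k m l b :
  #|slotted_marked k m l b| = #|marked k m l b| * (m.+1 - b).
Proof.
rewrite (card_setX_dep _ (fun GB : arcs2 m => free_slots GB.2)) -sum_nat_const.
by apply: eq_bigr => GB; rewrite in_marked => /and3P[_ /card_free_slots -> /eqP ->].
Qed.

Lemma card_marked_rec k m l b : 1 < k ->
  #|marked k m.+2 l b.+1| * b.+1 = #|marked k m l b| * (m.+1 - b).
Proof.
move=> lt1k; rewrite -card_pointed_marked -card_slotted_marked pointed_marked_image //.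
by apply/card_in_imset/can_in_inj => y _; apply: contract_insert_slot.
Qed.

Lemma card_marked_sum k n l b :
  #|marked k n l b| = \sum_(G in kdigraphs k n l) 'C(#|one_arcs G|, b).
Proof.
pose subsets (G : arcset n) := [set B : arcset n | B \subset one_arcs G & #|B| == b].
have -> : marked k n l b =
    [set GB | (GB.1 \in kdigraphs k n l) && (GB.2 \in subsets GB.1)].
  by apply/setP => GB; rewrite in_marked !inE.
by rewrite card_setX_dep; apply: eq_bigr => G _; rewrite cards_draws.
Qed.

Lemma card_marked k n l b : 1 < k ->
  #|marked k n l b| = 'C(n - b, b) * fk k (n - 2 * b) l.
Proof.
move=> lt1k; elim: b n => [|b IHb] n.
  rewrite card_marked_sum (eq_bigr (fun=> 1)) => [|G _]; last exact: bin0.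
  by rewrite sum1_card !subn0 bin0 mul1n.
case: n => [|[|m]]; try by rewrite card_marked_sum big1 // => G _;
  rewrite one_arcs_lt2 // cards0 bin0n.
have rec := card_marked_rec m l b lt1k; rewrite IHb in rec.
have -> : m.+2 - 2 * b.+1 = m - 2 * b by lia.
have binE : 'C(m - b, b) * (m.+1 - b) = 'C(m.+1 - b, b.+1) * b.+1.
  by rewrite mulnC [RHS]mulnC -mul_bin_diag; congr (_ * 'C(_, _)); lia.
by apply/eqP; rewrite -(eqn_pmul2r (ltn0Sn b)) rec subSS mulnAC binE mulnAC.
Qed.

Lemma Skl_sum k n l : Skl k n l = \sum_(G in kdigraphs k n l) (#|one_arcs G| == 0).
Proof.
rewrite -big_mkcondr sum1_card; apply: eq_card => G; rewrite !inE.
by rewrite /k_noncrossing_RNA has_1arcE unfold_in /= inE cards_eq0 negbK andbAC.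
Qed.

Lemma Sk_sum k n : Sk k n = \sum_(0 <= l < n.+1) Skl k n l.
Proof.
rewrite /Sk -sum1_card big_mkord.
rewrite (partition_big (fun G => inord (n_isolated G) : 'I_n.+1) xpredT) //=.
apply: eq_bigr => j _; rewrite /Skl -sum1_card; apply: eq_bigl => G; rewrite !inE.
by rewrite -val_eqE /= inordK ?ltnS ?n_isolated_le // andbA.
Qed.

Import GRing.Theory.
Local Open Scope ring_scope.

Lemma sum_nat_cut (V : nmodType) (F : nat -> V) M N :
  (M <= N)%N -> (forall b, (M <= b)%N -> F b = 0) ->
  \sum_(0 <= b < N) F b = \sum_(0 <= b < M) F b.
Proof.
move=> leMN F0; rewrite (big_cat_nat (leq0n M) leMN) /= [X in _ + X]big_nat_cond.
by rewrite [X in _ + X]big1 ?addr0 // => b /andP[/andP[/F0 -> _] _].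
Qed.

Lemma sum_alternating_binomial (R : comPzRingType) (c N : nat) : (c < N)%N ->
  \sum_(0 <= b < N) (-1) ^+ b * ('C(c, b))%:R = (c == 0)%:R :> R.
Proof.
move=> lt_cN; rewrite (sum_nat_cut lt_cN) => [|b lt_cb]; last by rewrite bin_small ?mulr0.
have := exprDn (1 : R) (-1) c; rewrite subrr expr0n => ->; rewrite big_mkord.
by apply: eq_bigr => b _; rewrite expr1n mul1r mulr_natr.
Qed.

Lemma Skl_alternating k n l :
  (Skl k n l)%:Z = \sum_(0 <= b < (n * n).+1) (-1) ^+ b * (#|marked k n l b|)%:Z.
Proof.
have one_arcs_lt (G : arcset n) : (#|one_arcs G| < (n * n).+1)%N.
  by rewrite ltnS (leq_trans (max_card _)) // card_prod card_ord.
rewrite Skl_sum -natz natr_sum.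
under eq_bigr => G _ do rewrite -(sum_alternating_binomial _ (one_arcs_lt G)).
rewrite exchange_big /=; apply: eq_bigr => b _.
by rewrite card_marked_sum -natz natr_sum mulr_sumr.
Qed.

Lemma binomial_fk_eq0 k n l b : (n - l < 2 * b)%N ->
  ('C(n - b, b) * fk k (n - 2 * b) l = 0)%N.
Proof.
move=> lt_b; have [lt_n2b|le_2bn] := ltnP n (2 * b).
  by rewrite bin_small ?mul0n //; lia.
by rewrite fk_eq0 ?muln0 //; lia.
Qed.

Lemma Skl_formula k n l N : (1 < k)%N -> ((n - l) %/ 2 < N)%N ->
  (Skl k n l)%:Z =
  \sum_(0 <= b < N) (-1) ^+ b * ('C(n - b, b))%:Z * (fk k (n - 2 * b) l)%:Z.
Proof.
move=> lt1k lt_N; rewrite Skl_alternating.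
under eq_bigr => b _ do rewrite card_marked //.
under [RHS]eq_bigr => b _ do rewrite -mulrA -PoszM.
have vanish b : (((n - l) %/ 2).+1 <= b)%N ->
    (-1) ^+ b * ('C(n - b, b) * fk k (n - 2 * b) l)%:Z = 0.
  by rewrite ltn_divLR // mulnC => /binomial_fk_eq0 ->; rewrite mulr0.
have le_M : ((n - l) %/ 2 <= n * n)%N.
  apply: leq_trans (leq_div _ _) (leq_trans (leq_subr _ _) _).
  by case: (posnP n) => [->|n_pos] //; apply: leq_pmull.
by rewrite [LHS](sum_nat_cut _ vanish) ?ltnS // (sum_nat_cut lt_N vanish).
Qed.

Theorem theorem3p1 (k n l : nat) (hk : (2 <= k)%N) (hn : (1 <= n)%N) :
  ((Skl k n l)%:Z =
     \sum_(0 <= b < ((n - l) %/ 2).+1)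
        (-1) ^+ b * ('C(n - b, b))%:Z * (fk k (n - 2 * b) l)%:Z)
  /\
  ((Sk k n)%:Z =
     \sum_(0 <= b < (n %/ 2).+1)
        (-1) ^+ b * ('C(n - b, b))%:Z *
          (\sum_(0 <= l' < (n - 2 * b).+1) (fk k (n - 2 * b) l')%:Z)).
Proof.
split; first exact: Skl_formula.
have lt_half l' : ((n - l') %/ 2 < (n %/ 2).+1)%N by rewrite ltnS leq_div2r ?leq_subr.
rewrite Sk_sum -natz natr_sum.
under eq_bigr => l' _ do rewrite natz (Skl_formula hk (lt_half l')).
rewrite exchange_big /=; apply: eq_bigr => b _; rewrite -mulr_sumr.
congr (_ * _); apply: sum_nat_cut => [|l' lt_l']; first by rewrite ltnS leq_subr.
by rewrite fk_eq0.
Qed.
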